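(* Let $X,Y$ be random variables on finite alphabets $\mathcal{X},\mathcal{Y}$ with $|\mathcal{X}|<|\mathcal{Y}|$ and joint pmf $P_{XY}$ whose marginals have all entries positive, and with $P_{X|Y}$ of full row rank. For $\epsilon\ge0$ define $g_{\epsilon}(X,Y)=\max\{I(U;Y): P_{U|Y},\ X-Y-U,\ \chi^2(P_{X|U=u}\|P_X)\le\epsilon^2\ \forall u\}$ and $f_{\epsilon}(X,Y)=\max\{I(U;Y): P_{U|Y},\ X-Y-U,\ \|P_{X|U=u}-P_X\|_1\le\epsilon\ \forall u\}$. Then $g_{\epsilon}(X,Y)\le f_{\epsilon}(X,Y)\le g_{\epsilon'}(X,Y)$, where $\epsilon'=\epsilon/\sqrt{\min_{x}P_X(x)}$.
   Context: $U$ ranges over random variables on finite alphabets, generated from $Y$ through a kernel $P_{U|Y}$ so that $P_{XYU}=P_{XY}P_{U|Y}$. $\chi^2(P\|Q)=\sum_x (P(x)-Q(x))^2/Q(x)$ and $\|\cdot\|_1$ is the $\ell_1$ norm. *)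

From HB Require Import structures.
From mathcomp Require Import all_boot all_order all_algebra.
From mathcomp Require Import classical_sets boolp reals exp.
Set Implicit Arguments. Unset Strict Implicit. Unset Printing Implicit Defensive.
Import Order.TTheory GRing.Theory Num.Theory.
Local Open Scope ring_scope.
Local Open Scope classical_set_scope.

Section Defs.
Variables (R : realType) (X Y : finType).

Definition is_pmf2 (P : X -> Y -> R) : Prop :=
  (forall x y, 0 <= P x y) /\ \sum_(x : X) \sum_(y : Y) P x y = 1.

Definition PX (P : X -> Y -> R) (x : X) : R := \sum_(y : Y) P x y.
Definition PY (P : X -> Y -> R) (y : Y) : R := \sum_(x : X) P x y.

Definition PXgY_mx (P : X -> Y -> R) : 'M[R]_(#|X|, #|Y|) :=
  \matrix_(i < #|X|, j < #|Y|) (P (enum_val i) (enum_val j) / PY P (enum_val j)).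

Definition is_kernel (U : finType) (K : Y -> U -> R) : Prop :=
  (forall y u, 0 <= K y u) /\ (forall y, \sum_(u : U) K y u = 1).

(* P_{XYU} = P_{XY} P_{U|Y} (Markov chain X - Y - U) *)
Definition PU (P : X -> Y -> R) (U : finType) (K : Y -> U -> R) (u : U) : R :=
  \sum_(y : Y) PY P y * K y u.

Definition PXgU (P : X -> Y -> R) (U : finType) (K : Y -> U -> R) (u : U)
  (x : X) : R := (\sum_(y : Y) P x y * K y u) / PU P K u.

(* I(U;Y) in nats, with 0 log 0 = 0 *)
Definition MI_UY (P : X -> Y -> R) (U : finType) (K : Y -> U -> R) : R :=
  \sum_(y : Y) \sum_(u : U)
    (let j := PY P y * K y u in
     if j == 0 then 0 else j * ln (j / (PY P y * PU P K u))).

Definition chi2 (p q : X -> R) : R := \sum_(x : X) (p x - q x) ^+ 2 / q x.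
Definition l1dist (p q : X -> R) : R := \sum_(x : X) `|p x - q x|.

(* g_eps : chi-square constraint; f_eps : l1 constraint.  The constraint is
   imposed for every u with P_U(u) > 0 (P_{X|U=u} is undefined otherwise). *)
Definition g_set (P : X -> Y -> R) (eps : R) : set R :=
  [set r | exists (U : finType) (K : Y -> U -> R), is_kernel K /\
     (forall u, 0 < PU P K u -> chi2 (PXgU P K u) (PX P) <= eps ^+ 2) /\
     r = MI_UY P K].

Definition f_set (P : X -> Y -> R) (eps : R) : set R :=
  [set r | exists (U : finType) (K : Y -> U -> R), is_kernel K /\
     (forall u, 0 < PU P K u -> l1dist (PXgU P K u) (PX P) <= eps) /\
     r = MI_UY P K].

Definition g_eps (P : X -> Y -> R) (eps : R) : R := sup (g_set P eps).
Definition f_eps (P : X -> Y -> R) (eps : R) : R := sup (f_set P eps).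

(* min_x P_X(x); the seed 1 is harmless since P_X(x) <= 1 for a pmf *)
Definition minPX (P : X -> Y -> R) : R := \big[Num.min/1]_(x : X) PX P x.

End Defs.

From HB Require Import structures.
From mathcomp Require Import all_boot all_order all_algebra.
From mathcomp Require Import classical_sets boolp reals exp.
From mathcomp Require Import ring.
Set Implicit Arguments. Unset Strict Implicit. Unset Printing Implicit Defensive.
Import Order.TTheory GRing.Theory Num.Theory.
Local Open Scope ring_scope.
Local Open Scope classical_set_scope.

(* For a reference pmf q with full support, writing t = |p - q| / q, the
   l1 distance is the q-mean of t and chi^2(p||q) is the q-mean of t^2, so
   Jensen gives ||p - q||_1^2 <= chi^2(p||q).  Conversely |p x - q x| is at most
   ||p - q||_1, hence chi^2(p||q) <= ||p - q||_1^2 / min q.  So every channel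
   admissible for one privacy constraint is admissible for the other, and the
   suprema compare; both feasible sets contain the constant channel and are
   bounded by H(Y). *)

Section Divergences.
Variables (R : realType) (X : finType).

Lemma jensen_sqr (q t : X -> R) : (forall x, 0 <= q x) -> \sum_x q x = 1 ->
  (\sum_x q x * t x) ^+ 2 <= \sum_x q x * t x ^+ 2.
Proof.
move=> q_ge0 q_sum1; set m := \sum_x q x * t x.
have variance_ge0 : 0 <= \sum_x q x * (t x - m) ^+ 2.
  by apply: sumr_ge0 => x _; rewrite mulr_ge0 ?sqr_ge0.
have variance_eq :
    \sum_x q x * (t x - m) ^+ 2 = \sum_x q x * t x ^+ 2 - m ^+ 2.
  transitivity (\sum_x (q x * t x ^+ 2 - (2 * m) * (q x * t x) + m ^+ 2 * q x)).
    by apply: eq_bigr => x _; ring.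
  by rewrite big_split /= sumrB -!mulr_sumr -/m q_sum1; ring.
by rewrite -subr_ge0 -variance_eq.
Qed.

Lemma l1dist_ge0 (p q : X -> R) : 0 <= l1dist p q.
Proof. exact: sumr_ge0. Qed.

Lemma l1dist_sqr_le_chi2 (p q : X -> R) : (forall x, 0 < q x) ->
  \sum_x q x = 1 -> l1dist p q ^+ 2 <= chi2 p q.
Proof.
move=> q_gt0 q_sum1; set t := fun x => `|p x - q x| / q x.
have q_neq0 x : q x != 0 by rewrite gt_eqF.
have -> : l1dist p q = \sum_x q x * t x.
  by apply: eq_bigr => x _; rewrite /t mulrCA mulfV ?mulr1.
have -> : chi2 p q = \sum_x q x * t x ^+ 2.
  apply: eq_bigr => x _; rewrite /t expr_div_n real_normK ?num_real //.
  by field.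
by apply: jensen_sqr => // x; exact: ltW.
Qed.

Lemma chi2_le_l1dist_sqr (p q : X -> R) (m : R) : 0 < m ->
  (forall x, m <= q x) -> chi2 p q <= l1dist p q ^+ 2 / m.
Proof.
move=> m_gt0 m_le_q.
apply: (@le_trans _ _ (\sum_x (p x - q x) ^+ 2 / m)).
  apply: ler_sum => x _; apply: ler_wpM2l; first exact: sqr_ge0.
  by rewrite lef_pV2 ?posrE // (lt_le_trans m_gt0).
rewrite -mulr_suml; apply: ler_wpM2r; first by rewrite invr_ge0 ltW.
rewrite [X in _ <= X]expr2 {2}/l1dist mulr_sumr; apply: ler_sum => x _.
rewrite -real_normK ?num_real // expr2 ler_wpM2r //.
by rewrite /l1dist (bigD1 x) //= lerDl sumr_ge0.
Qed.

End Divergences.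

Section Leakage.
Variables (R : realType) (X Y : finType) (P : X -> Y -> R).
Hypotheses (P_pmf : is_pmf2 P) (PY_gt0 : forall y, 0 < PY P y).

Definition entropyY : R := \sum_y PY P y * - ln (PY P y).

Lemma MI_UY_le_entropyY (U : finType) (K : Y -> U -> R) :
  is_kernel K -> MI_UY P K <= entropyY.
Proof.
move=> [K_ge0 K_sum1]; apply: ler_sum => y _.
have -> : PY P y * - ln (PY P y) = \sum_u PY P y * K y u * - ln (PY P y).
  by rewrite -mulr_suml -mulr_sumr K_sum1 mulr1.
apply: ler_sum => u _ /=.
have j_ge0 : 0 <= PY P y * K y u by rewrite mulr_ge0 // ltW.
case: eqP => [->|/eqP j_neq0]; first by rewrite mul0r.
have j_gt0 : 0 < PY P y * K y u by rewrite lt_neqAle eq_sym j_neq0.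
have j_le_PU : PY P y * K y u <= PU P K u.
  rewrite /PU (bigD1 y) //= lerDl sumr_ge0 // => z _.
  by rewrite mulr_ge0 // ltW.
have PU_gt0 : 0 < PU P K u by exact: lt_le_trans j_le_PU.
have PYPU_gt0 : 0 < PY P y * PU P K u by rewrite mulr_gt0.
rewrite ler_wpM2l // -lnV ?posrE // ler_ln ?posrE ?divr_gt0 ?invr_gt0 //.
apply: (@le_trans _ _ (PU P K u / (PY P y * PU P K u))).
  by rewrite ler_wpM2r // invr_ge0 ltW.
by rewrite invfM mulrCA mulfV ?mulr1 // lt0r_neq0.
Qed.

Definition const_kernel (y : Y) (u : unit) : R := 1.

Lemma const_kernel_is_kernel : is_kernel const_kernel.
Proof. by split=> // y; rewrite sumr_const card_unit. Qed.

Lemma PXgU_const_kernel u : PXgU P const_kernel u = PX P.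
Proof.
have PU1 : PU P const_kernel u = 1.
  by rewrite -P_pmf.2 exchange_big; apply: eq_bigr => y _; rewrite mulr1.
apply/funext => x; rewrite /PXgU PU1 divr1.
by apply: eq_bigr => y _; rewrite mulr1.
Qed.

Lemma g_set_const_kernel eps : g_set P eps (MI_UY P const_kernel).
Proof.
exists unit, const_kernel; split; first exact: const_kernel_is_kernel.
split=> // u _; rewrite PXgU_const_kernel /chi2 big1 ?sqr_ge0 // => x _.
by rewrite subrr expr0n mul0r.
Qed.

Lemma f_set_const_kernel eps : 0 <= eps -> f_set P eps (MI_UY P const_kernel).
Proof.
move=> eps_ge0; exists unit, const_kernel; split; first exact: const_kernel_is_kernel.
split=> // u _; rewrite PXgU_const_kernel /l1dist big1 // => x _.
by rewrite subrr normr0.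
Qed.

Lemma has_sup_g_set eps : has_sup (g_set P eps).
Proof.
split; first by exists (MI_UY P const_kernel); exact: g_set_const_kernel.
by exists entropyY => _ [U [K [K_ker [_ ->]]]]; exact: MI_UY_le_entropyY.
Qed.

Lemma has_sup_f_set eps : 0 <= eps -> has_sup (f_set P eps).
Proof.
move=> eps_ge0; split.
  by exists (MI_UY P const_kernel); exact: f_set_const_kernel.
by exists entropyY => _ [U [K [K_ker [_ ->]]]]; exact: MI_UY_le_entropyY.
Qed.

Hypothesis PX_gt0 : forall x, 0 < PX P x.

Lemma minPX_gt0 : 0 < minPX P.
Proof. by apply: lt_bigmin => // x _; exact: PX_gt0. Qed.

Lemma minPX_le x : minPX P <= PX P x.
Proof. exact: bigmin_le. Qed.

Lemma g_set_sub_f_set eps : 0 <= eps -> g_set P eps `<=` f_set P eps.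
Proof.
move=> eps_ge0 _ [U [K [K_ker [chi2_le ->]]]]; exists U, K; do 2!split=> //.
move=> u /chi2_le /(le_trans (l1dist_sqr_le_chi2 _ PX_gt0 P_pmf.2)).
by rewrite ler_sqr ?nnegrE ?l1dist_ge0.
Qed.

Lemma f_set_sub_g_set eps : 0 <= eps ->
  f_set P eps `<=` g_set P (eps / Num.sqrt (minPX P)).
Proof.
move=> eps_ge0 _ [U [K [K_ker [l1_le ->]]]]; exists U, K; do 2!split=> //.
move=> u /l1_le l1_le_eps; rewrite expr_div_n sqr_sqrtr ?(ltW minPX_gt0) //.
apply: le_trans (chi2_le_l1dist_sqr _ minPX_gt0 minPX_le) _.
apply: ler_wpM2r; first by rewrite invr_ge0 (ltW minPX_gt0).
by rewrite ler_sqr ?nnegrE ?l1dist_ge0.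
Qed.

End Leakage.

Theorem corollary1 (R : realType) (X Y : finType) (P : X -> Y -> R) (eps : R) :
  is_pmf2 P ->
  (#|X| < #|Y|)%N ->
  (forall x, 0 < PX P x) ->
  (forall y, 0 < PY P y) ->
  \rank (PXgY_mx P) = #|X| ->
  0 <= eps ->
  g_eps P eps <= f_eps P eps /\
  f_eps P eps <= g_eps P (eps / Num.sqrt (minPX P)).
Proof.
(* The comparison holds channel by channel. *)
move=> P_pmf _ PX_gt0 PY_gt0 _ eps_ge0; split; apply: sup_le.
- by move=> r /(g_set_sub_f_set P_pmf PX_gt0 eps_ge0); apply: le_down.
- exact: (has_sup_g_set P_pmf PY_gt0 eps).1.
- exact: has_sup_f_set.
- by move=> r /(f_set_sub_g_set PX_gt0 eps_ge0); apply: le_down.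
- exact: (has_sup_f_set P_pmf PY_gt0 eps_ge0).1.
- exact: has_sup_g_set.
Qed.
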